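(* In the two-tier residency matching game described in the context (list length $K$, high-match value $v>1$), under the large market approximation, a symmetric equilibrium for high doctors always exists.
   Context: Model: there are high-tier and low-tier doctors and high-tier and low-tier hospitals, each hospital having one position. Every hospital prefers every high doctor to every low doctor, and every doctor prefers every high hospital to every low hospital; within a tier, preferences are independent uniformly random permutations. Each doctor submits a ranked list of exactly $K$ hospitals; hospitals submit full true rankings; doctor-proposing deferred acceptance is run. A doctor's strategy is a pair $(k,K-k)$: he lists his $k$ most preferred high hospitals followed by his $K-k$ most preferred low hospitals. A doctor gets value $v>1$ if matched to a high hospital, $1$ if matched to a low one, $0$ otherwise. Large market approximation: in the limit of many agents (tier proportions, $K$, $v$ fixed), given the strategy profile, each application of a high doctor to a high (resp. low) hospital is accepted independently with a probability $p$ (resp. $p'$) determined by the aggregate profile via fixed-point equations (expected matched doctors = expected hospitals receiving at least one application, a hospital with on average $\lambda$ applications receiving none with probability $e^{-\lambda}$), and unaffected by an individual doctor's choice. Since hospitals rank all high doctors above low ones, the high doctors' assignment does not depend on low doctors. A symmetric equilibrium for high doctors is a (possibly mixed) strategy used by all high doctors such that every strategy in its support maximizes a high doctor's expected value given $p,p'$. *)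

From HB Require Import structures.
From mathcomp Require Import all_boot all_order all_algebra.
From mathcomp Require Import all_classical all_reals all_analysis.
Set Implicit Arguments. Unset Strict Implicit. Unset Printing Implicit Defensive.
Import Order.TTheory GRing.Theory Num.Theory.
Local Open Scope ring_scope.

Section TwoTier.
Variable R : realType.

(* A pure strategy of a high doctor is k : 'I_K.+1, meaning the list
   (k, K-k): his k most preferred high hospitals, then his K-k most
   preferred low hospitals. *)
Definition is_mixed (K : nat) (sigma : 'I_K.+1 -> R) : Prop :=
  (forall k, 0 <= sigma k) /\ \sum_(k < K.+1) sigma k = 1.

(* Expected number of applications actually made (during DA) to a block of
   j hospitals listed consecutively, each accepting independently with
   probability q: the doctor proposes until first acceptance,
   i.e. sum_{i<j} (1-q)^i  ( = (1-(1-q)^j)/q ). *)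
Definition napps (q : R) (j : nat) : R := \sum_(i < j) (1 - q) ^+ i.

Definition pmatch (q : R) (j : nat) : R := 1 - (1 - q) ^+ j.

(* Expected value for a high doctor playing (k, K-k) given acceptance
   probabilities p (high hospitals) and p' (low hospitals). *)
Definition value (v p p' : R) (K k : nat) : R :=
  v * pmatch p k + (1 - p) ^+ k * pmatch p' (K - k).

(* Fixed-point equation for p (high hospitals), mass nH of high doctors,
   mass mH of high hospitals: expected number of matched high doctors at
   high hospitals = expected number of high hospitals receiving at least
   one application (Poisson with mean lambda = applications / mH).  If no
   application at all is sent to high hospitals the equation is void; we
   then use the limiting convention p = 1. *)
Definition high_fixed_point (nH mH : R) (K : nat) (sigma : 'I_K.+1 -> R)
    (p : R) : Prop :=
  let A := \sum_(k < K.+1) sigma k * napps p k in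
  let M := \sum_(k < K.+1) sigma k * pmatch p k in
  [/\ 0 < p <= 1,
      nH * M = mH * (1 - expR (- (nH * A / mH)))
    & A = 0 -> p = 1].

(* Low hospitals rank
   all high doctors above all low doctors, so only high doctors matter.  A
   high doctor playing k reaches the low part of his list with probability
   (1-p)^k. *)
Definition low_fixed_point (nH mL : R) (K : nat) (sigma : 'I_K.+1 -> R)
    (p p' : R) : Prop :=
  let A := \sum_(k < K.+1) sigma k * ((1 - p) ^+ k * napps p' (K - k)) in
  let M := \sum_(k < K.+1) sigma k * ((1 - p) ^+ k * pmatch p' (K - k)) in
  [/\ 0 < p' <= 1,
      nH * M = mL * (1 - expR (- (nH * A / mL)))
    & A = 0 -> p' = 1].

Definition symmetric_equilibrium (nH mH mL v : R) (K : nat)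
    (sigma : 'I_K.+1 -> R) : Prop :=
  is_mixed sigma /\
  exists p p' : R,
    [/\ high_fixed_point nH mH sigma p,
        low_fixed_point nH mL sigma p p'
      & forall k : 'I_K.+1, 0 < sigma k ->
          forall k' : 'I_K.+1, value v p p' K k' <= value v p p' K k].

End TwoTier.

From HB Require Import structures.
From mathcomp Require Import all_boot all_order all_algebra.
From mathcomp Require Import all_classical all_reals all_analysis.
From mathcomp Require Import ring lra zify.
Import Order.TTheory GRing.Theory Num.Theory.
Import numFieldNormedType.Exports.
Local Open Scope ring_scope.
Set Implicit Arguments. Unset Strict Implicit. Unset Printing Implicit Defensive.

(* Mixtures of two adjacent list lengths j and j + 1 are parametrised by a real
   t = j + s in [0, K].  For each t the acceptance probabilities p(t) and p'(t)
   are the unique roots of continuous, strictly increasing fixed-point gaps, so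
   they depend continuously on t.  A high doctor playing k loses
   (1 - p)^k (v - 1 + (1 - p')^(K - k)) against v; since j |-> v - 1 + (1 - p')^(K - j)
   is log-convex, the increments of this loss change sign at most once, and k is a
   best response as soon as the increment turns from nonpositive to nonnegative at k.
   For small t the increment at 0 is negative (high hospitals accept almost
   surely); walking up through the integers, either some pure strategy j is a best
   response to itself, or the increment between j and j + 1 changes sign inside
   (j, j + 1) and the intermediate value theorem yields a mixed equilibrium. *)

Section Lists.
Context {R : realType}.
Implicit Types (x y : R) (j : nat).

Lemma napps0 x : napps x 0 = 0.
Proof. by rewrite /napps big_ord0. Qed.

Lemma nappsS x j : napps x j.+1 = napps x j + (1 - x) ^+ j.
Proof. by rewrite /napps big_ord_recr. Qed.

Lemma napps1 x : napps x 1 = 1.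
Proof. by rewrite nappsS napps0 add0r. Qed.

Lemma pmatch_napps x j : pmatch x j = x * napps x j.
Proof.
elim: j => [|j IH]; first by rewrite /pmatch napps0 subrr mulr0.
by rewrite nappsS mulrDr -IH /pmatch exprS; ring.
Qed.

Lemma napps_ge0 x j : x <= 1 -> 0 <= napps x j.
Proof. by move=> x1; apply: sumr_ge0 => i _; apply: exprn_ge0; lra. Qed.

Lemma napps_ge1 x j : x <= 1 -> (0 < j)%N -> 1 <= napps x j.
Proof.
move=> x1; case: j => // j _; rewrite /napps big_ord_recl expr0 lerDl.
by apply: sumr_ge0 => i _; apply: exprn_ge0; lra.
Qed.

Lemma le_napps x y j : 0 <= x <= y -> y <= 1 -> napps y j <= napps x j.
Proof.
move=> /andP[x0 xy] y1; apply: ler_sum => i _.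
by apply: lerXn2r; rewrite ?nnegrE; lra.
Qed.

Lemma le_pmatch x y j : 0 <= x <= y -> y <= 1 -> pmatch x j <= pmatch y j.
Proof.
move=> /andP[x0 xy] y1; rewrite /pmatch lerD2l lerN2.
by apply: lerXn2r; rewrite ?nnegrE; lra.
Qed.

Lemma lt_pmatch x y j :
  0 <= x -> x < y -> y <= 1 -> (0 < j)%N -> pmatch x j < pmatch y j.
Proof.
by move=> x0 xy y1 j0; rewrite /pmatch ltrD2l ltrN2 ltrXn2r ?subr_ge0 -?lt0n //; lra.
Qed.

End Lists.

(* The library rules are stated for [f + g], [f \* g], ...; these eta-expanded
   forms can be applied backwards to goals written with explicit lambdas. *)
Section ContinuityRules.
Context {R : realType}.
Implicit Types (f g : R -> R) (x : R).

Lemma cont_cst (a : R) x : {for x, continuous (fun _ : R => a)}.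
Proof. exact: cvg_cst. Qed.

Lemma cont_id x : {for x, continuous (fun s : R => s)}.
Proof. exact: cvg_id. Qed.

Lemma cont_add f g x : {for x, continuous f} -> {for x, continuous g} ->
  {for x, continuous (fun s => f s + g s)}.
Proof. exact: continuousD. Qed.

Lemma cont_sub f g x : {for x, continuous f} -> {for x, continuous g} ->
  {for x, continuous (fun s => f s - g s)}.
Proof. exact: continuousB. Qed.

Lemma cont_mul f g x : {for x, continuous f} -> {for x, continuous g} ->
  {for x, continuous (fun s => f s * g s)}.
Proof. exact: continuousM. Qed.

Lemma cont_opp f x : {for x, continuous f} -> {for x, continuous (fun s => - f s)}.
Proof. exact: continuousN. Qed.

Lemma cont_exprn f n x : {for x, continuous f} ->
  {for x, continuous (fun s => f s ^+ n)}.
Proof. by move=> fx; exact: (continuous_comp fx (@exprn_continuous R n (f x))). Qed.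

Lemma cont_expR f x : {for x, continuous f} -> {for x, continuous (fun s => expR (f s))}.
Proof. by move=> fx; exact: (continuous_comp fx (@continuous_expR R (f x))). Qed.

Lemma cont_max f g x : {for x, continuous f} -> {for x, continuous g} ->
  {for x, continuous (fun s => Num.max (f s) (g s))}.
Proof. exact: continuous_max. Qed.

Lemma cont_norm f x : {for x, continuous f} -> {for x, continuous (fun s => `|f s|)}.
Proof. exact: cvg_norm. Qed.

Lemma cont_sum n (F : 'I_n -> R -> R) x : (forall i, {for x, continuous (F i)}) ->
  {for x, continuous (fun s => \sum_(i < n) F i s)}.
Proof. by move=> Fx; apply: (@cvg_big _ _ +%R 0 xpredT add_continuous) => // i _; exact: Fx. Qed.

End ContinuityRules.

Section Neighbourhoods.
Context {R : realType}.

Lemma near_itvoo (a b t0 : R) : a < t0 < b -> \forall t \near t0, a < t < b.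
Proof.
move=> t0_itv; have t0_in : t0 \in `]a, b[ by rewrite in_itv.
by apply: filterS (near_in_itvoo t0_in) => t; rewrite in_itv.
Qed.

Lemma near_left_witness (P : R -> Prop) (a b : R) :
  b < a -> (\forall t \near a, P t) -> exists2 t, b < t < a & P t.
Proof.
move=> ba /nbhs_ballP[e /= e0 aeP]; set t := (Num.max b (a - e) + a) / 2.
have b_le : b <= Num.max b (a - e) by rewrite le_max lexx.
have ae_le : a - e <= Num.max b (a - e) by rewrite le_max lexx orbT.
have max_lt : Num.max b (a - e) < a by rewrite gt_max ba; lra.
exists t; first by apply/andP; split; rewrite /t; lra.
by apply: aeP; rewrite /ball /= ltr_norml; apply/andP; split; rewrite /t; lra.
Qed.

End Neighbourhoods.

Section RootContinuity.
Context {R : realType}.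
Context {G : R -> R -> R} {X : R -> R} {s0 : R}.
Hypothesis G_cont : forall x, {for s0, continuous (G^~ x)}.
Hypothesis G_mono : \forall s \near s0, forall x y, 0 <= x <= y -> y <= 1 -> G s x <= G s y.
Hypothesis X_root : \forall s \near s0, 0 <= X s <= 1 /\ G s (X s) = 0.

Lemma root_near_lbound {e : R} : 0 < e ->
  (forall x, 0 <= x -> x < X s0 -> G s0 x < 0) -> \forall s \near s0, X s0 - e < X s.
Proof.
move=> e0 G_neg; have [/andP[X0 X1] _] := nbhs_singleton X_root.
have [lo_lt0 | lo_ge0] := ltP (X s0 - e / 2) 0.
  near=> s; have [/andP[Xs0 _] _] : 0 <= X s <= 1 /\ G s (X s) = 0 by near: s.
  lra.
have G_lo : G s0 (X s0 - e / 2) < 0 by apply: G_neg => //; lra.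
near=> s.
have Gs_lo : G s (X s0 - e / 2) < 0 by near: s; exact: cvgr_lt _ (@G_cont _) _ G_lo.
have [/andP[Xs0 Xs1] GXs] : 0 <= X s <= 1 /\ G s (X s) = 0 by near: s.
rewrite ltNge; apply/negP => X_le.
have Gs_mono : forall x y, 0 <= x <= y -> y <= 1 -> G s x <= G s y by near: s.
have : G s (X s) <= G s (X s0 - e / 2) by apply: Gs_mono; rewrite ?Xs0 /=; lra.
lra.
Unshelve. all: by end_near.
Qed.

End RootContinuity.

(* The upper bound is the lower bound for the reflected family x |-> - G s (1 - x). *)
Lemma monotone_root_continuous {R : realType} (G : R -> R -> R) (X : R -> R) s0 :
  (forall x, {for s0, continuous (G^~ x)}) ->
  (\forall s \near s0, forall x y, 0 <= x <= y -> y <= 1 -> G s x <= G s y) ->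
  (\forall s \near s0, 0 <= X s <= 1 /\ G s (X s) = 0) ->
  (forall x, 0 <= x -> x < X s0 -> G s0 x < 0) ->
  (forall x, X s0 < x -> x <= 1 -> 0 < G s0 x) ->
  {for s0, continuous X}.
Proof.
move=> G_cont G_mono X_root G_neg G_pos; apply/cvgrPdist_lt => e e0.
have X_lo := root_near_lbound G_cont G_mono X_root e0 G_neg.
have X_hi : \forall s \near s0, (1 - X s0) - e < 1 - X s.
  apply: (@root_near_lbound _ (fun s x => - G s (1 - x))) => //.
  - by move=> x; apply: cont_opp; exact: G_cont.
  - apply: filterS G_mono => s Gs_mono x y /andP[x0 xy] y1; rewrite lerN2.
    by apply: Gs_mono; rewrite ?subr_ge0 ?lerB //=; lra.
  - apply: filterS X_root => s [/andP[X0 X1] GX].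
    have -> : 1 - (1 - X s) = X s by ring.
    by rewrite GX oppr0; split => //; apply/andP; split; lra.
  - by move=> x x0 x_lt; rewrite oppr_lt0; apply: G_pos; lra.
near=> s; rewrite ltr_distlC.
have : X s0 - e < X s by near: s.
have : 1 - X s0 - e < 1 - X s by near: s.
lra.
Unshelve. all: by end_near.
Qed.

Lemma one_sub_expRN_lt {R : realType} (y : R) : 0 < y -> 1 - expR (- y) < y.
Proof.
move=> y0; have ny_neq0 : - y != 0 by rewrite oppr_eq0 gt_eqF.
by have := expR_gt1Dx ny_neq0; lra.
Qed.

Lemma expRN_le_quadratic {R : realType} (y : R) : 0 <= y -> expR (- y) <= 1 - y + y ^+ 2.
Proof.
move=> y0; have E0 := expR_ge0 (- y).
have E1 : expR (- y) * (1 + y) <= 1.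
  rewrite -[leRHS]expR0 -(addNr y) expRD.
  by apply: ler_wpM2l => //; exact: expR_ge1Dx.
rewrite -(ler_pM2r (_ : 0 < 1 + y)); last lra.
apply: le_trans E1 _; have : 0 <= y ^+ 3 by exact: exprn_ge0.
have -> : (1 - y + y ^+ 2) * (1 + y) = 1 + y ^+ 3 by ring.
lra.
Qed.

Section FixedPoint.
Context {R : realType} {K : nat} (c m : R).
Hypotheses (c_gt0 : 0 < c) (m_gt0 : 0 < m).
Implicit Types (w : 'I_K.+1 -> R) (d : 'I_K.+1 -> nat) (x y : R).

Definition apps w d x := \sum_(k < K.+1) w k * napps x (d k).
Definition matches w d x := \sum_(k < K.+1) w k * pmatch x (d k).
Definition fp_gap w d x := c * matches w d x - m * (1 - expR (- (c * apps w d x / m))).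
Definition is_fp w d x := [/\ 0 < x <= 1,
  c * matches w d x = m * (1 - expR (- (c * apps w d x / m))) & apps w d x = 0 -> x = 1].
Definition active w d := exists k, 0 < w k /\ (0 < d k)%N.
(* [xget] defaults to 1, but a fixed point always exists ([exists_is_fp]). *)
Definition fp w d := xget 1 (is_fp w d).

Lemma matchesE w d x : matches w d x = x * apps w d x.
Proof. by rewrite /matches mulr_sumr; apply: eq_bigr => k _; rewrite pmatch_napps; ring. Qed.

Lemma apps_gt0 w d x : (forall k, 0 <= w k) -> active w d -> x <= 1 -> 0 < apps w d x.
Proof.
move=> w_ge0 [k [wk dk]] x1; rewrite /apps (bigD1 k) //=.
apply: ltr_pwDl; last by apply: sumr_ge0 => i _; rewrite mulr_ge0 ?napps_ge0.
by rewrite mulr_gt0 // (lt_le_trans ltr01) ?napps_ge1.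
Qed.

Lemma apps_inactive w d x : (forall k, 0 <= w k) -> ~ active w d -> apps w d x = 0.
Proof.
move=> w_ge0 inactive; apply: big1 => k _.
have [->|dk] := posnP (d k); first by rewrite napps0 mulr0.
have [wk|wk] := eqVneq (w k) 0; first by rewrite wk mul0r.
by case: inactive; exists k; rewrite lt_def wk w_ge0.
Qed.

Lemma le_apps w d x y : (forall k, 0 <= w k) -> 0 <= x <= y -> y <= 1 ->
  apps w d y <= apps w d x.
Proof. by move=> w_ge0 xy y1; apply: ler_sum => k _; rewrite ler_wpM2l ?le_napps. Qed.

Lemma le_matches w d x y : (forall k, 0 <= w k) -> 0 <= x <= y -> y <= 1 ->
  matches w d x <= matches w d y.
Proof. by move=> w_ge0 xy y1; apply: ler_sum => k _; rewrite ler_wpM2l ?le_pmatch. Qed.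

Lemma lt_matches w d x y : (forall k, 0 <= w k) -> active w d -> 0 <= x -> x < y -> y <= 1 ->
  matches w d x < matches w d y.
Proof.
move=> w_ge0 [k [wk dk]] x0 xy y1; rewrite /matches [ltRHS](bigD1 k) // [ltLHS](bigD1 k) //=.
apply: ltr_leD; first by rewrite ltr_pM2l ?lt_pmatch.
by apply: ler_sum => i _; rewrite ler_wpM2l ?le_pmatch // x0 (ltW xy).
Qed.

Lemma expR_apps_le w d x y : (forall k, 0 <= w k) -> 0 <= x <= y -> y <= 1 ->
  expR (- (c * apps w d x / m)) <= expR (- (c * apps w d y / m)).
Proof.
move=> w_ge0 xy y1.
by rewrite ler_expR lerN2 ler_pM2r ?invr_gt0 // ler_pM2l ?le_apps.
Qed.

Lemma le_fp_gap w d x y : (forall k, 0 <= w k) -> 0 <= x <= y -> y <= 1 ->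
  fp_gap w d x <= fp_gap w d y.
Proof.
move=> w_ge0 xy y1; have := expR_apps_le d w_ge0 xy y1.
have := le_matches d w_ge0 xy y1; rewrite /fp_gap -(ler_pM2l c_gt0).
have := m_gt0; nra.
Qed.

Lemma lt_fp_gap w d x y : (forall k, 0 <= w k) -> active w d -> 0 <= x -> x < y -> y <= 1 ->
  fp_gap w d x < fp_gap w d y.
Proof.
move=> w_ge0 act x0 xy y1.
have xy' : 0 <= x <= y by rewrite x0 ltW.
have := expR_apps_le d w_ge0 xy' y1.
have := lt_matches w_ge0 act x0 xy y1; rewrite /fp_gap -(ltr_pM2l c_gt0).
have := m_gt0; nra.
Qed.

Lemma fp_gap0_lt0 w d : (forall k, 0 <= w k) -> active w d -> fp_gap w d 0 < 0.
Proof.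
move=> w_ge0 act; rewrite /fp_gap matchesE mul0r mulr0 sub0r oppr_lt0.
rewrite mulr_gt0 // subr_gt0 expR_lt1 oppr_lt0.
by rewrite divr_gt0 ?mulr_gt0 ?apps_gt0 ?ler01.
Qed.

Lemma fp_gap1_gt0 w d : (forall k, 0 <= w k) -> active w d -> 0 < fp_gap w d 1.
Proof.
move=> w_ge0 act; rewrite /fp_gap matchesE mul1r subr_gt0.
have y0 : 0 < c * apps w d 1 / m by rewrite divr_gt0 ?mulr_gt0 ?apps_gt0.
by rewrite -[ltRHS](divfK (lt0r_neq0 m_gt0)) [ltRHS]mulrC ltr_pM2l //; exact: one_sub_expRN_lt.
Qed.

Lemma napps_continuous (x : R -> R) j t0 : {for t0, continuous x} ->
  {for t0, continuous (fun t => napps (x t) j)}.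
Proof. by move=> xt; apply: cont_sum => i; apply/cont_exprn/cont_sub => //; exact: cont_cst. Qed.

Lemma fp_gap_continuous (w : R -> 'I_K.+1 -> R) d (x : R -> R) t0 :
  (forall k, {for t0, continuous (fun t => w t k)}) -> {for t0, continuous x} ->
  {for t0, continuous (fun t => fp_gap (w t) d (x t))}.
Proof.
move=> wt xt; have cst (a : R) : {for t0, continuous (fun=> a)} by exact: cont_cst.
have sum_wt (f : 'I_K.+1 -> R -> R) : (forall k, {for t0, continuous (f k)}) ->
    {for t0, continuous (fun t => \sum_(k < K.+1) w t k * f k t)}.
  by move=> ft; apply: cont_sum => k; apply: cont_mul; [exact: wt | exact: ft].
apply: cont_sub; apply: cont_mul; try exact: cst.
  by apply: sum_wt => k; apply/cont_sub/cont_exprn/cont_sub; [exact: cst | exact: cst|].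
apply: cont_sub; first exact: cst.
apply/cont_expR/cont_opp/cont_mul; last exact: cst.
apply: cont_mul; first exact: cst.
by apply: sum_wt => k; exact: napps_continuous.
Qed.

Lemma continuous_fp_gap w d (x : R) : {for x, continuous (fp_gap w d)}.
Proof.
exact: (@fp_gap_continuous (fun=> w) d id x (fun k => @cont_cst R (w k) x) (@cont_id R x)).
Qed.

Lemma is_fp_gap w d x : is_fp w d x -> fp_gap w d x = 0.
Proof. by case=> _ e _; rewrite /fp_gap e subrr. Qed.

Lemma exists_is_fp w d : (forall k, 0 <= w k) -> exists x, is_fp w d x.
Proof.
move=> w_ge0; have [act|inact] := pselect (active w d); last first.
  exists 1; rewrite /is_fp matchesE apps_inactive // ltr01 lexx.
  by rewrite !mulr0 mul0r oppr0 expR0 subrr mulr0.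
have [| |x /[!in_itv] /= /andP[x0 x1] gap0] := @IVT R (fp_gap w d) 0 1 0 ler01.
- by apply: continuous_subspaceT => x; exact: continuous_fp_gap.
- by rewrite ge_min le_max (ltW (fp_gap0_lt0 w_ge0 act)) (ltW (fp_gap1_gt0 w_ge0 act)) orbT.
exists x; split.
- rewrite x1 andbT lt_def x0 andbT; apply/eqP => x_eq0; subst x.
  by have := fp_gap0_lt0 w_ge0 act; rewrite gap0 ltxx.
- by apply/eqP; rewrite -subr_eq0; exact/eqP.
- by move=> apps0; have := apps_gt0 w_ge0 act x1; rewrite apps0 ltxx.
Qed.

Lemma fp_itv w d : 0 < fp w d <= 1.
Proof. by rewrite /fp; case: xgetP => [x _ []|_] //; rewrite ltr01 lexx. Qed.

Lemma is_fp_fp w d : (forall k, 0 <= w k) -> is_fp w d (fp w d).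
Proof. by move=> w_ge0; apply: xgetPex; exact: exists_is_fp. Qed.

Lemma fp_gap_fp w d : (forall k, 0 <= w k) -> fp_gap w d (fp w d) = 0.
Proof. by move=> w_ge0; apply: is_fp_gap; exact: is_fp_fp. Qed.

Lemma fp_lt1 w d : (forall k, 0 <= w k) -> active w d -> fp w d < 1.
Proof.
move=> w_ge0 act; have /andP[_ fp1] := fp_itv w d; rewrite lt_def fp1 andbT.
by apply/eqP => fp_eq1; have := fp_gap1_gt0 w_ge0 act; rewrite fp_eq1 fp_gap_fp ?ltxx.
Qed.

Lemma fp_inactive w d : (forall k, 0 <= w k) -> ~ active w d -> fp w d = 1.
Proof. by move=> w_ge0 inact; case: (is_fp_fp d w_ge0) => _ _; apply; exact: apps_inactive. Qed.

Lemma one_sub_fp_le w d : (forall k, 0 <= w k) -> active w d ->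
  1 - fp w d <= c * apps w d (fp w d) / m.
Proof.
move=> w_ge0 act; have [_ + _] := is_fp_fp d w_ge0; rewrite matchesE.
set x := fp w d; set y := c * apps w d x / m.
have y0 : 0 < y by rewrite divr_gt0 ?mulr_gt0 ?apps_gt0 //; case/andP: (fp_itv w d).
have -> : c * (x * apps w d x) = m * (x * y) by rewrite /y; field; exact: lt0r_neq0.
move=> /(mulfI (lt0r_neq0 m_gt0)) xy; have := expRN_le_quadratic (ltW y0).
nra.
Qed.

Lemma fp_continuous (w : R -> 'I_K.+1 -> R) d t0 : (forall t k, 0 <= w t k) ->
  (\forall t \near t0, active (w t) d) -> (forall k, {for t0, continuous (fun t => w t k)}) ->
  {for t0, continuous (fun t => fp (w t) d)}.
Proof.
move=> w_ge0 act w_cont; have act0 := nbhs_singleton act.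
have /andP[fp0 fp1] := fp_itv (w t0) d; have gap0 := fp_gap_fp d (w_ge0 t0).
apply: (@monotone_root_continuous _ (fun t => fp_gap (w t) d)).
- by move=> x; apply: fp_gap_continuous w_cont (@cont_cst _ x t0).
- by apply: filterE => t x y xy y1; exact: le_fp_gap.
- apply: filterE => t; have /andP[fpt0 fpt1] := fp_itv (w t) d.
  by rewrite ltW ?fp_gap_fp.
- by move=> x x0 x_lt; rewrite -gap0 lt_fp_gap.
- by move=> x x_gt x1; rewrite -gap0; apply: lt_fp_gap => //; exact: ltW.
Qed.

End FixedPoint.

Section BestResponse.
Context {R : realType} (v p p' : R) (K : nat).
Hypotheses (v_gt1 : 1 < v) (p_ge0 : 0 <= p) (p_le1 : p <= 1).
Hypotheses (p'_ge0 : 0 <= p') (p'_le1 : p' <= 1).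

Definition tail_loss (j : nat) : R := v - 1 + (1 - p') ^+ (K - j).
Definition loss (k : nat) : R := (1 - p) ^+ k * tail_loss k.
Definition loss_step (i : nat) : R := (1 - p) * tail_loss i.+1 - tail_loss i.

Lemma valueE k : value v p p' K k = v - loss k.
Proof. by rewrite /value /pmatch /loss /tail_loss; ring. Qed.

Lemma lossS i : loss i.+1 - loss i = (1 - p) ^+ i * loss_step i.
Proof. by rewrite /loss /loss_step exprS; ring. Qed.

Lemma tail_loss_gt0 j : 0 < tail_loss j.
Proof. by rewrite /tail_loss ltr_pwDl ?subr_gt0 // exprn_ge0 // subr_ge0. Qed.

Lemma loss_step_le i : loss_step i <= (1 - p) * v - (v - 1).
Proof.
have q'_ge0 : 0 <= 1 - p' by rewrite subr_ge0.
have r_le1 : (1 - p') ^+ (K - i.+1) <= 1 by rewrite exprn_ile1 // lerBlDr lerDl.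
have : (1 - p) * tail_loss i.+1 <= (1 - p) * v by rewrite ler_wpM2l ?subr_ge0 // /tail_loss; lra.
by rewrite /loss_step; have := exprn_ge0 (K - i) q'_ge0; rewrite /tail_loss; lra.
Qed.

Lemma loss_step_last : (0 < K)%N -> loss_step K.-1 = 1 - v * p - (1 - p').
Proof.
move=> K_gt0; rewrite /loss_step /tail_loss prednK // subnn -subn1 subKn //.
by rewrite expr0 expr1; ring.
Qed.

Lemma tail_loss_log_convex i : (i.+2 <= K)%N ->
  tail_loss i.+1 ^+ 2 <= tail_loss i * tail_loss i.+2.
Proof.
move=> iK; rewrite /tail_loss (_ : K - i = (K - i.+2).+2)%N; last lia.
rewrite (_ : K - i.+1 = (K - i.+2).+1)%N; last lia.
rewrite ![(1 - p') ^+ _.+1]exprS; set b := (1 - p') ^+ _; set a := 1 - p'.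
have b0 : 0 <= b by rewrite exprn_ge0 // subr_ge0.
rewrite -subr_ge0; have -> : (v - 1 + a * (a * b)) * (v - 1 + b) - (v - 1 + a * b) ^+ 2 =
  (v - 1) * b * (1 - a) ^+ 2 by ring.
by rewrite mulr_ge0 ?sqr_ge0 // mulr_ge0 // subr_ge0 ltW.
Qed.

Lemma loss_step_ge0S i : (i.+2 <= K)%N -> 0 <= loss_step i -> 0 <= loss_step i.+1.
Proof.
move=> iK; have := tail_loss_log_convex iK; rewrite /loss_step !subr_ge0 expr2 => cvx step.
have := tail_loss_gt0 i; have := tail_loss_gt0 i.+1; have := tail_loss_gt0 i.+2.
nra.
Qed.

Lemma loss_step_gt0S i : (i.+2 <= K)%N -> 0 < loss_step i -> 0 < loss_step i.+1.
Proof.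
move=> iK; have := tail_loss_log_convex iK; rewrite /loss_step !subr_gt0 expr2 => cvx step.
have := tail_loss_gt0 i; have := tail_loss_gt0 i.+1; have := tail_loss_gt0 i.+2.
nra.
Qed.

Lemma loss_step_ge0_up i j : (i <= j < K)%N -> 0 <= loss_step i -> 0 <= loss_step j.
Proof.
move=> /andP[+ jK]; elim: j jK => [|j IH] jK; first by rewrite leqn0 => /eqP->.
rewrite leq_eqVlt => /orP[/eqP-> //|ij] step_i.
by apply: loss_step_ge0S => //; apply: IH => //; lia.
Qed.

Lemma loss_step_le0_down i j : (i <= j < K)%N -> loss_step j <= 0 -> loss_step i <= 0.
Proof.
move=> /andP[+ jK]; elim: j jK => [|j IH] jK; first by rewrite leqn0 => /eqP->.
rewrite leq_eqVlt => /orP[/eqP-> //|ij] step_j; apply: IH; try lia.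
by rewrite leNgt; apply: contraTN step_j; rewrite -ltNge; exact: loss_step_gt0S.
Qed.

Lemma loss_min k : (k <= K)%N -> (forall i, (i < k)%N -> loss_step i <= 0) ->
  (forall i, (k <= i < K)%N -> 0 <= loss_step i) ->
  forall k', (k' <= K)%N -> loss k <= loss k'.
Proof.
move=> kK step_le0 step_ge0 k' k'K; have q_ge0 i : 0 <= (1 - p) ^+ i.
  by rewrite exprn_ge0 // subr_ge0.
have [kk'|k'k] := leqP k k'.
  apply: (@Order.NatMonotonyTheory.nondecn_inP _ _ [pred i | k <= i <= K]%N);
    rewrite ?inE ?kK ?kk' ?leqnn //.
    by move=> a b /[!inE] ha hb c /andP[] ac cb; rewrite inE; lia.
  move=> i /[!inE] /andP[ki _] /andP[_ iK].
  by rewrite -subr_ge0 lossS mulr_ge0 // step_ge0 // ki iK.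
apply: (@Order.NatMonotonyTheory.nonincn_inP _ _ [pred i | i <= k]%N);
  rewrite ?inE ?leqnn ?leEnat ?(ltnW k'k) //.
  by move=> a b /[!inE] ha hb c /andP[] ac cb; rewrite inE; lia.
move=> i _ /[!inE] ik.
by rewrite -subr_le0 lossS mulr_ge0_le0 // step_le0.
Qed.

Lemma value_best k : (k <= K)%N -> (k = 0%N \/ loss_step k.-1 <= 0) ->
  (k = K \/ 0 <= loss_step k) ->
  forall k', (k' <= K)%N -> value v p p' K k' <= value v p p' K k.
Proof.
move=> kK step_pred step_k k' k'K; rewrite !valueE lerD2l lerN2; apply: loss_min => // i.
  case: step_pred => [-> //|step_pred] ik.
  by apply: (loss_step_le0_down (j := k.-1)) => //; lia.
case: step_k => [-> /andP[Ki iK]|step_k ki]; first lia.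
exact: loss_step_ge0_up ki step_k.
Qed.

End BestResponse.

Section Tent.
Context {R : realType} {K : nat}.
Implicit Types (t s : R) (k : 'I_K.+1).

Definition tent t k : R := Num.max 0 (1 - `|t - k%:R|).

Lemma tent_ge0 t k : 0 <= tent t k.
Proof. by rewrite /tent le_max lexx. Qed.

Lemma tent_gt0 t k : k%:R - 1 < t -> t < k%:R + 1 -> 0 < tent t k.
Proof.
move=> k_lo k_hi; rewrite /tent lt_max subr_gt0 ltr_norml.
by apply/orP; right; apply/andP; split; lra.
Qed.

Lemma tent_continuous k t0 : {for t0, continuous (tent^~ k)}.
Proof.
apply: cont_max; first exact: cont_cst.
by apply/cont_sub/cont_norm/cont_sub; [exact: cont_cst | exact: cont_id | exact: cont_cst].
Qed.

Lemma tent_seg (j : nat) s k : 0 <= s <= 1 ->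
  tent (j%:R + s) k = if k == j :> nat then 1 - s else if k == j.+1 :> nat then s else 0.
Proof.
move=> /andP[s0 s1]; rewrite /tent.
have [->|kj] := eqVneq (k : nat) j.
  have -> : j%:R + s - j%:R = s by ring.
  by rewrite ger0_norm // max_r // subr_ge0.
have [->|kj1] := eqVneq (k : nat) j.+1.
  have -> : j%:R + s - j.+1%:R = s - 1 by rewrite -natr1; ring.
  by rewrite ler0_norm ?max_r; lra.
apply: max_l; rewrite subr_le0.
have [kj'|jk] := ltnP k j.
  have : (k.+1%:R <= j%:R :> R) by rewrite ler_nat.
  by rewrite -natr1 => kj_R; rewrite ger0_norm; lra.
have : (j.+2%:R <= k%:R :> R) by rewrite ler_nat; lia.
by rewrite -!natr1 => jk_R; rewrite ler0_norm; lra.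
Qed.

Lemma sum_tent_seg (j : nat) s (F : nat -> R) : (j < K)%N -> 0 <= s <= 1 ->
  \sum_k tent (j%:R + s) k * F k = (1 - s) * F j + s * F j.+1.
Proof.
move=> jK s01; rewrite (bigD1 (Ordinal (ltn_trans jK (ltnSn K)))) //.
rewrite (bigD1 (@Ordinal K.+1 j.+1 jK)) /=; last first.
  by rewrite -val_eqE /= neq_ltn ltnSn orbT.
rewrite !tent_seg //= eqxx (gtn_eqF (ltnSn j)) eqxx big1 ?addr0 // => k /andP[kj1 kj].
by rewrite tent_seg // -!val_eqE /= in kj kj1 *; rewrite (negbTE kj) (negbTE kj1) mul0r.
Qed.

End Tent.

Section Equilibrium.
Context {R : realType} (nH mH mL v : R) (K : nat).
Hypotheses (nH_gt0 : 0 < nH) (mH_gt0 : 0 < mH) (mL_gt0 : 0 < mL).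
Hypotheses (K_gt0 : (0 < K)%N) (v_gt1 : 1 < v).
Implicit Types (t : R) (j : nat).

Definition high_len (k : 'I_K.+1) : nat := k.
Definition low_len (k : 'I_K.+1) : nat := K - k.

Definition acc_high t : R := fp nH mH (tent t) high_len.
Definition low_weight t (k : 'I_K.+1) : R := tent t k * (1 - acc_high t) ^+ k.
Definition acc_low t : R := fp nH mL (low_weight t) low_len.
Definition step j t : R := loss_step v (acc_high t) (acc_low t) K j.
Definition best_response t (k : nat) : Prop := forall k' : 'I_K.+1,
  value v (acc_high t) (acc_low t) K k' <= value v (acc_high t) (acc_low t) K k.

Lemma acc_high_itv t : 0 < acc_high t <= 1.
Proof. exact: fp_itv. Qed.

Lemma acc_low_itv t : 0 < acc_low t <= 1.
Proof. exact: fp_itv. Qed.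

Lemma tent_active t : 0 < t < K.+1%:R -> active (tent t) high_len.
Proof.
move=> /andP[t_gt0 t_lt]; have [t_lt1|t_ge1] := ltP t 1.
  by exists (@Ordinal K.+1 1 K_gt0); split; rewrite // tent_gt0 //=; lra.
have [k_le k_gt] := andP (truncn_itv (ltW t_gt0)).
have kK : (Num.truncn t < K.+1)%N by rewrite ltnS truncn_le_nat.
exists (Ordinal kK); split; last by rewrite /high_len /= truncn_gt0.
by rewrite tent_gt0 //=; move: k_gt; rewrite -natr1; lra.
Qed.

Lemma acc_high_lt1 t : 0 < t < K.+1%:R -> acc_high t < 1.
Proof. by move=> t_itv; apply: fp_lt1 => //; [exact: tent_ge0 | exact: tent_active]. Qed.

Lemma acc_high_continuous t0 : 0 < t0 < K.+1%:R -> {for t0, continuous acc_high}.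
Proof.
move=> t0_itv; apply: fp_continuous => //.
- exact: tent_ge0.
- by apply: filterS (near_itvoo t0_itv) => t; exact: tent_active.
- by move=> k; exact: tent_continuous.
Qed.

Lemma low_weight_ge0 t k : 0 <= low_weight t k.
Proof.
rewrite mulr_ge0 ?tent_ge0 // exprn_ge0 // subr_ge0.
by case/andP: (acc_high_itv t).
Qed.

Lemma low_active t : 0 < t < K%:R -> active (low_weight t) low_len.
Proof.
move=> /andP[t_gt0 t_lt]; have [k_le k_gt] := andP (truncn_itv (ltW t_gt0)).
have kK : (Num.truncn t < K)%N by rewrite -(prednK K_gt0) ltnS truncn_le_nat prednK.
exists (Ordinal (ltn_trans kK (ltnSn K))); split; last by rewrite /low_len /= subn_gt0.
rewrite mulr_gt0 //=; first by rewrite tent_gt0 //; move: k_gt; rewrite -natr1; lra.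
rewrite exprn_gt0 // subr_gt0 acc_high_lt1 // t_gt0 /=.
by rewrite (lt_trans t_lt) // ltr_nat.
Qed.

Lemma acc_low_continuous t0 : 0 < t0 < K%:R -> {for t0, continuous acc_low}.
Proof.
move=> /[dup] t0_itv /andP[t0_gt0 t0_lt]; apply: fp_continuous => //.
- by move=> t k; exact: low_weight_ge0.
- by apply: filterS (near_itvoo t0_itv) => t; exact: low_active.
move=> k; apply: cont_mul; first exact: tent_continuous.
apply/cont_exprn/cont_sub; first exact: cont_cst.
by apply: acc_high_continuous; rewrite t0_gt0 (lt_trans t0_lt) ?ltr_nat.
Qed.

Lemma acc_low_K : acc_low K%:R = 1.
Proof.
apply: fp_inactive => //; first exact: low_weight_ge0.
move=> [k [w_gt0 len_gt0]]; move: w_gt0 len_gt0; rewrite /low_weight /low_len.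
have -> : K%:R = K.-1%:R + 1 :> R by rewrite natr1 prednK.
rewrite tent_seg ?ler01 ?lexx // prednK // subrr.
case: eqP => _; first by rewrite mul0r ltxx.
by case: eqP => [->|_]; rewrite ?subnn // mul0r ltxx.
Qed.

Lemma high_fixed_point_acc t : high_fixed_point nH mH (tent t : 'I_K.+1 -> R) (acc_high t).
Proof. by apply: is_fp_fp => //; exact: tent_ge0. Qed.

Lemma low_fixed_point_acc t :
  low_fixed_point nH mL (tent t : 'I_K.+1 -> R) (acc_high t) (acc_low t).
Proof.
have mulrA_sum (F G : 'I_K.+1 -> R) :
    \sum_k tent t k * (F k * G k) = \sum_k tent t k * F k * G k.
  by apply: eq_bigr => k _; rewrite mulrA.
rewrite /low_fixed_point /= !mulrA_sum.
exact: (is_fp_fp nH_gt0 mL_gt0 low_len (@low_weight_ge0 t)).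
Qed.

Lemma step_continuous j t0 : 0 < t0 < K%:R -> {for t0, continuous (step j)}.
Proof.
move=> /[dup] t0_itv /andP[t0_gt0 t0_lt].
have high_t0 : {for t0, continuous acc_high}.
  by apply: acc_high_continuous; rewrite t0_gt0 (lt_trans t0_lt) ?ltr_nat.
have low_t0 := acc_low_continuous t0_itv.
have cst (a : R) : {for t0, continuous (fun=> a)} by exact: cont_cst.
have tail_t0 i : {for t0, continuous (fun t => v - 1 + (1 - acc_low t) ^+ (K - i))}.
  by apply: cont_add; [exact: cst | apply/cont_exprn/cont_sub].
rewrite /step /loss_step /tail_loss.
by apply: cont_sub => //; apply: cont_mul => //; apply: cont_sub.
Qed.

Lemma apps_tent_first t x : 0 <= t <= 1 -> apps (tent t) high_len x = t.
Proof.
move=> t01; have := sum_tent_seg (j := 0) (napps x) K_gt0 t01.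
by rewrite add0r napps0 napps1 mulr0 add0r mulr1.
Qed.

Lemma one_sub_acc_high_le t : 0 < t <= 1 -> 1 - acc_high t <= nH * t / mH.
Proof.
move=> /andP[t_gt0 t_le1]; have t01 : 0 <= t <= 1 by rewrite ltW.
rewrite -[in leRHS](apps_tent_first (acc_high t) t01) /acc_high.
apply: one_sub_fp_le => //; first exact: tent_ge0.
by apply: tent_active; rewrite t_gt0 (le_lt_trans t_le1) // ltr1n.
Qed.

(* Few high doctors apply to high hospitals, which then accept almost surely. *)
Lemma step0_lt0 : exists2 lo, 0 < lo < 1 & step 0 lo < 0.
Proof.
set lo := Num.min (1 / 2) ((v - 1) * mH / (2 * v * nH)).
have v_gt0 : 0 < v := lt_trans ltr01 v_gt1.
have lo_gt0 : 0 < lo by rewrite lt_min !divr_gt0 ?mulr_gt0 ?subr_gt0.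
have lo_le_half : lo <= 1 / 2 by rewrite ge_min lexx.
have lo_le : lo * (2 * v * nH) <= (v - 1) * mH.
  by rewrite -ler_pdivlMr ?mulr_gt0 // ge_min lexx orbT.
clearbody lo; exists lo; first by apply/andP; split; lra.
have [a_gt0 a_le1] := andP (acc_high_itv lo); have [b_gt0 b_le1] := andP (acc_low_itv lo).
apply: le_lt_trans (loss_step_le v K a_le1 (ltW b_gt0) b_le1 0) _.
have lo_itv : 0 < lo <= 1 by rewrite lo_gt0 /=; lra.
have := one_sub_acc_high_le lo_itv; rewrite ler_pdivlMr // => acc_le.
rewrite subr_lt0 -(ltr_pM2r mH_gt0); apply: (@le_lt_trans _ _ (nH * lo * v)).
  by rewrite mulrAC ler_wpM2r // ltW.
have : 0 < (v - 1) * mH by rewrite mulr_gt0 ?subr_gt0.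
have : 0 < nH * lo * v by rewrite !mulr_gt0.
move: lo_le; rewrite (_ : lo * (2 * v * nH) = 2 * (nH * lo * v)); [lra | ring].
Qed.

Lemma apps_low_last t x : K.-1%:R <= t <= K%:R ->
  apps (low_weight t) low_len x = (K%:R - t) * (1 - acc_high t) ^+ K.-1.
Proof.
move=> /andP[t_ge t_le]; have s01 : 0 <= t - K.-1%:R <= 1.
  by rewrite subr_ge0 t_ge lerBlDl natr1 prednK.
have Kpred : (K.-1 < K)%N by rewrite ltn_predL.
have := sum_tent_seg (j := K.-1) (fun n => (1 - acc_high t) ^+ n * napps x (K - n))
  Kpred s01.
have K_sub : (K - K.-1 = 1)%N by rewrite -subn1 subKn.
rewrite [_ + (t - _)]addrC subrK prednK // subnn napps0 !mulr0 addr0 K_sub napps1 mulr1.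
have -> : 1 - (t - K.-1%:R) = K%:R - t by rewrite -[in RHS](prednK K_gt0) -natr1; ring.
by move=> <-; apply: eq_bigr => k _; rewrite mulrA.
Qed.

Lemma one_sub_acc_low_le t : K.-1%:R < t < K%:R -> 1 - acc_low t <= nH * (K%:R - t) / mL.
Proof.
move=> /andP[t_gt t_lt]; have t_gt0 : 0 < t by apply: le_lt_trans t_gt.
have act : active (low_weight t) low_len by apply: low_active; rewrite t_gt0.
apply: le_trans (one_sub_fp_le nH_gt0 mL_gt0 (@low_weight_ge0 t) act) _.
rewrite apps_low_last; last by rewrite !ltW.
rewrite ler_pM2r ?invr_gt0 // ler_pM2l //; apply: ler_piMr; first by rewrite subr_ge0 ltW.
have [acc_gt0 acc_le1] := andP (acc_high_itv t).
by rewrite exprn_ile1 //; lra.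
Qed.

Lemma step_last t : step K.-1 t = 1 - v * acc_high t - (1 - acc_low t).
Proof. exact: loss_step_last. Qed.

(* [acc_low] need not be continuous at K, but near K the low hospitals receive
   almost no applications, which is enough ([one_sub_acc_low_le]). *)
Lemma step_last_gt0_near b : b < K%:R -> 0 < step K.-1 K%:R ->
  exists2 hi, Num.max b K.-1%:R < hi < K%:R & 0 < step K.-1 hi.
Proof.
move=> b_lt; rewrite step_last acc_low_K subrr subr0 => step_K.
pose f (t : R) := 1 - v * acc_high t - nH * (K%:R - t) / mL.
have cst (a : R) : {for (K%:R : R), continuous (fun=> a)} by exact: cont_cst.
have f_cont : {for (K%:R : R), continuous f}.
  rewrite /f; apply: cont_sub.
    apply: cont_sub; first exact: cst.
    apply: cont_mul; first exact: cst.
    by apply: acc_high_continuous; rewrite ltr0n K_gt0 ltr_nat /=.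
  apply: cont_mul; last exact: cst.
  by apply: cont_mul; [exact: cst | apply: cont_sub; [exact: cst | exact: cont_id]].
have f_K : 0 < f K%:R by rewrite /f subrr mulr0 mul0r subr0.
have near_pos : \forall t \near (K%:R : R), 0 < f t by exact: cvgr_gt _ f_cont _ f_K.
have max_lt : Num.max b K.-1%:R < K%:R by rewrite gt_max b_lt ltr_nat ltn_predL.
have [hi /andP[hi_gt hi_lt] f_hi] := near_left_witness max_lt near_pos.
exists hi; first by rewrite hi_gt.
apply: lt_le_trans f_hi _; rewrite step_last /f lerB //.
move: hi_gt; rewrite gt_max => /andP[_ Kpred_lt].
by apply: one_sub_acc_low_le; rewrite Kpred_lt.
Qed.

Lemma step_le0_down t i j : (i <= j < K)%N -> step j t <= 0 -> step i t <= 0.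
Proof.
have [/andP[a_gt0 a_le1] /andP[b_gt0 b_le1]] := (acc_high_itv t, acc_low_itv t).
rewrite /step.
exact: (loss_step_le0_down (i := i) (j := j) v_gt1 (ltW a_gt0) a_le1 (ltW b_gt0) b_le1).
Qed.

Lemma step_ge0_up t i j : (i <= j < K)%N -> 0 <= step i t -> 0 <= step j t.
Proof.
have [/andP[a_gt0 a_le1] /andP[b_gt0 b_le1]] := (acc_high_itv t, acc_low_itv t).
rewrite /step.
exact: (loss_step_ge0_up (i := i) (j := j) v_gt1 (ltW a_gt0) a_le1 (ltW b_gt0) b_le1).
Qed.

Lemma best_response_of_steps t k : (k <= K)%N ->
  (k = 0%N \/ step k.-1 t <= 0) -> (k = K \/ 0 <= step k t) -> best_response t k.
Proof.
have [/andP[a_gt0 a_le1] /andP[b_gt0 b_le1]] := (acc_high_itv t, acc_low_itv t).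
move=> kK step_pred step_k k'; have k'K := ltn_ord k'.
exact: (value_best (k' := k') v_gt1 (ltW a_gt0) a_le1 (ltW b_gt0) b_le1 kK step_pred step_k k'K).
Qed.

Lemma equilibrium_at j s : (j < K)%N -> 0 <= s <= 1 -> 0 < j%:R + s ->
  (s < 1 -> best_response (j%:R + s) j) -> (0 < s -> best_response (j%:R + s) j.+1) ->
  symmetric_equilibrium nH mH mL v (tent (j%:R + s) : 'I_K.+1 -> R).
Proof.
move=> jK s01 t_gt0 br_j br_j1; split.
  split; first exact: tent_ge0.
  have := sum_tent_seg (fun=> 1) jK s01; rewrite !mulr1 subrK => sum1.
  by rewrite -[RHS]sum1; apply: eq_bigr => k _; rewrite mulr1.
exists (acc_high (j%:R + s)), (acc_low (j%:R + s)); split.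
- exact: high_fixed_point_acc.
- exact: low_fixed_point_acc.
move=> k; rewrite tent_seg //.
case: eqP => [-> s_lt1|_]; first by apply: br_j; lra.
by case: eqP => [-> s_gt0|_]; [exact: br_j1 | rewrite ltxx].
Qed.

Lemma equilibrium_of_root j s : (j < K)%N -> 0 < s < 1 -> step j (j%:R + s) = 0 ->
  exists sigma : 'I_K.+1 -> R, symmetric_equilibrium nH mH mL v sigma.
Proof.
move=> jK /andP[s_gt0 s_lt1] step0; exists (tent (j%:R + s)).
have br_j : best_response (j%:R + s) j.
  apply: best_response_of_steps; [exact: ltnW | | by right; rewrite step0].
  case: j jK step0 => [|j] jK step0; [by left | right].
  by apply: (@step_le0_down _ j j.+1); rewrite ?step0 ?leqnSn.
have br_j1 : best_response (j%:R + s) j.+1.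
  apply: best_response_of_steps => //; first by right; rewrite step0.
  have [->|jK'] := eqVneq j.+1 K; [by left | right].
  by apply: (@step_ge0_up _ j j.+1); rewrite ?step0 // leqnSn ltn_neqAle jK' jK.
apply: equilibrium_at => //; first by rewrite !ltW.
by rewrite ltr_wpDl.
Qed.

Lemma equilibrium_of_crossing j : (j < K)%N -> (j = 0%N \/ step j j%:R < 0) ->
  0 < step j j.+1%:R -> exists sigma : 'I_K.+1 -> R, symmetric_equilibrium nH mH mL v sigma.
Proof.
move=> jK step_j step_j1.
have [lo [lo_ge lo_lt1 lo_gt0 step_lo]] :
    exists lo, [/\ j%:R <= lo, lo < j.+1%:R, 0 < lo & step j lo < 0].
  have [j0|j_gt0] := posnP j.
    have [lo /andP[lo_gt0 lo_lt1] step_lo] := step0_lt0.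
    by exists lo; rewrite j0 ltW.
  case: step_j => [j0|step_j]; first by rewrite j0 in j_gt0.
  by exists j%:R; rewrite ltr_nat ltr0n.
have [hi [lo_lt hi_le hi_lt step_hi]] :
    exists hi, [/\ lo < hi, hi <= j.+1%:R, hi < K%:R & 0 < step j hi].
  have [jK1|jK1] := eqVneq j.+1 K; last first.
    by exists j.+1%:R; rewrite ltr_nat ltn_neqAle jK1 jK.
  have j_eq : j = K.-1 by rewrite -jK1.
  have lo_lt : lo < K%:R by rewrite -jK1.
  rewrite jK1 j_eq in step_j1 *.
  have [hi /andP[hi_gt hi_lt] step_hi] := step_last_gt0_near lo_lt step_j1.
  by exists hi; rewrite ltW //; move: hi_gt; rewrite gt_max => /andP[].
have step_cont : {within `[lo, hi], continuous (step j)}%classic.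
  apply: continuous_in_subspaceT => x; rewrite inE /= in_itv /= => /andP[x_ge x_le].
  by apply: step_continuous; rewrite (lt_le_trans lo_gt0) // (le_lt_trans x_le).
have step_bnd : Num.min (step j lo) (step j hi) <= 0 <= Num.max (step j lo) (step j hi).
  by rewrite ge_min le_max (ltW step_lo) (ltW step_hi) orbT.
have [t] := IVT (ltW lo_lt) step_cont step_bnd; rewrite in_itv /= => /andP[t_ge t_le] step_t.
apply: (@equilibrium_of_root j (t - j%:R) jK); last by rewrite addrC subrK.
have t_gt : lo < t.
  by rewrite lt_def t_ge andbT; apply: contraTneq step_lo => <-; rewrite step_t ltxx.
have t_lt : t < hi.
  by rewrite lt_def t_le andbT; apply: contraTneq step_hi => ->; rewrite step_t ltxx.
by rewrite subr_gt0 ltrBlDl natr1 (le_lt_trans lo_ge) ?(lt_le_trans t_lt).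
Qed.

Lemma equilibrium_pure j : (0 < j <= K)%N -> step j.-1 j%:R <= 0 ->
  (j = K \/ 0 <= step j j%:R) ->
  exists sigma : 'I_K.+1 -> R, symmetric_equilibrium nH mH mL v sigma.
Proof.
move=> /andP[j_gt0 jK] step_pred step_j.
have br : best_response j%:R j by apply: best_response_of_steps => //; right.
have [jK'|j_eqK] := ltnP j K.
  exists (tent (j%:R + 0)); apply: equilibrium_at; rewrite ?addr0 ?lexx ?ler01 ?ltr0n //.
  by rewrite ltxx.
have j_eq : j = K by apply/eqP; rewrite eqn_leq jK.
subst j.
have KE : K%:R = K.-1%:R + 1 :> R by rewrite natr1 prednK.
rewrite KE in br; exists (tent (K.-1%:R + 1)).
apply: equilibrium_at; rewrite ?ltxx ?lexx ?ler01 //.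
  by rewrite ltn_predL.
by rewrite prednK.
Qed.

Lemma equilibrium_from j : (0 < j <= K)%N -> step j.-1 j%:R <= 0 ->
  exists sigma : 'I_K.+1 -> R, symmetric_equilibrium nH mH mL v sigma.
Proof.
move=> /andP[j_gt0 jK]; move Kj : (K - j)%N => n.
elim: n j Kj j_gt0 jK => [|n IH] j Kj j_gt0 jK step_pred.
  have j_eq : j = K by apply/eqP; rewrite eqn_leq jK -subn_eq0 Kj.
  by apply: (equilibrium_pure (j := j)) => //; [rewrite j_gt0 | left].
have jK' : (j < K)%N by rewrite -subn_gt0 Kj.
have [step_j|step_j] := leP 0 (step j j%:R).
  by apply: (equilibrium_pure (j := j)) => //; [rewrite j_gt0 | right].
have [step_j1|step_j1] := leP (step j j.+1%:R) 0.
  by apply: (IH j.+1); rewrite ?subnS ?Kj.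
by apply: (equilibrium_of_crossing (j := j)) => //; right.
Qed.

Lemma exists_equilibrium :
  exists sigma : 'I_K.+1 -> R, symmetric_equilibrium nH mH mL v sigma.
Proof.
have [step01|step01] := leP (step 0 1%:R) 0; first exact: (equilibrium_from (j := 1)).
by apply: (equilibrium_of_crossing (j := 0)) => //; left.
Qed.

End Equilibrium.

Unset Implicit Arguments.

Theorem lemma2 (R : realType) (nH mH mL v : R) (K : nat) :
  0 < nH -> 0 < mH -> 0 < mL -> (0 < K)%N -> 1 < v ->
  exists sigma : 'I_K.+1 -> R, symmetric_equilibrium nH mH mL v sigma.
Proof. exact: exists_equilibrium. Qed.
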